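(* Let $t,\ell,m$ be integers with $1 \le t \le \ell \le m$. Then the minimum distance of the determinantal code $\widehat{C}_{\det}(t;\ell,m)$ equals $$q^{\ell+m-2}\,\nu_{t-1}(\ell-1,m-1).$$
   Context: $q$ is a prime power. For nonnegative integers $a,b,t$, $\nu_t(a,b)$ is the number of $a\times b$ matrices over $\mathbb{F}_q$ of rank at most $t$. Let $\widehat{\mathcal D}_t(\ell,m)\subset\mathbb{P}^{\ell m-1}(\mathbb{F}_q)=\mathbb{P}(\mathrm{Mat}_{\ell\times m}(\mathbb{F}_q))$ be the set of points $[M]$ with $M\ne 0$ and $\mathrm{rk}(M)\le t$; let $\hat n=|\widehat{\mathcal D}_t(\ell,m)|$, enumerate its points $P_1,\dots,P_{\hat n}$ and choose representatives $M_i\in\mathrm{Mat}_{\ell\times m}(\mathbb{F}_q)$ of $P_i$. The determinantal code $\widehat{C}_{\det}(t;\ell,m)\subseteq\mathbb{F}_q^{\hat n}$ is the image of the map sending a linear form $f=\sum_{i,j}f_{ij}X_{ij}$ (with $X=(X_{ij})$ an $\ell\times m$ matrix of indeterminates) to $(f(M_1),\dots,f(M_{\hat n}))$. Its minimum distance is the smallest Hamming weight of a nonzero codeword. *)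

From HB Require Import structures.
From mathcomp Require Import all_boot all_order all_algebra all_fingroup all_field.
Set Implicit Arguments. Unset Strict Implicit. Unset Printing Implicit Defensive.
Import GRing.Theory.
Local Open Scope ring_scope.

Section Det.
Variable F : finFieldType.

Definition nu (t a b : nat) : nat := #|[set M : 'M[F]_(a, b) | (\rank M <= t)%N]|.

(* Canonical representative of a projective point of P(Mat_{l x m}(F)):
   a nonzero matrix whose first nonzero entry (in the order of mxvec) is 1. *)
Definition normalized (l m : nat) (M : 'M[F]_(l, m)) : bool :=
  [exists k : 'I_(l * m), (mxvec M 0 k == 1) &&
     [forall k' : 'I_(l * m), ((k' < k)%N) ==> (mxvec M 0 k' == 0)]].

Definition detPoints (t l m : nat) : {set 'M[F]_(l, m)} :=
  [set M : 'M[F]_(l, m) | (M != 0) && (\rank M <= t)%N && normalized M].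

Definition npts (t l m : nat) : nat := #|detPoints t l m|.

Definition linform (l m : nat) (f M : 'M[F]_(l, m)) : F :=
  \sum_(i < l) \sum_(j < m) f i j * M i j.

Definition codeword (t l m : nat) (f : 'M[F]_(l, m)) : {ffun 'I_(npts t l m) -> F} :=
  [ffun i => linform f (enum_val (A := mem (detPoints t l m)) i)].

Definition detCode (t l m : nat) : {set {ffun 'I_(npts t l m) -> F}} :=
  [set c | [exists f : 'M[F]_(l, m), c == codeword t f]].

Definition hweight (n : nat) (c : {ffun 'I_n -> F}) : nat := #|[set i | c i != 0]|.

Definition is_min_distance (n : nat) (C : {set {ffun 'I_n -> F}}) (d : nat) : Prop :=
  (exists2 c, c \in C & (c != 0) /\ hweight c = d) /\
  (forall c, c \in C -> c != 0 -> (d <= hweight c)%N).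

End Det.

From HB Require Import structures.
From mathcomp Require Import all_boot all_order all_algebra all_fingroup all_field.
Set Implicit Arguments. Unset Strict Implicit. Unset Printing Implicit Defensive.
Import GRing.Theory.
Local Open Scope ring_scope.

(* Work with affine counts: for a linear form f, the weight of its codeword times
   q - 1 is the number of matrices M of rank at most t with f(M) <> 0, and this
   number is invariant under f |-> P f Q with P, Q invertible.  Every f <> 0 is
   thus equivalent to X_11 + g(X'), where X' is the lower right block.  The count
   for X_11 + g is the number of rank <= t matrices minus those with
   M_11 = -g(M'); a rank-nonincreasing elimination (shifting the first column by
   an element of the column space of M') injects the latter into the matrices with
   M_11 = 0, so f = X_11 has the least weight.  Its count is computed with the
   Schur complement with respect to the pivot M_11 <> 0:
   (q - 1) q^(l+m-2) nu_(t-1)(l-1, m-1). *)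

Section BlockRank.
Variable F : fieldType.

Lemma mx11_eq0 (a : 'M[F]_1) : (a == 0) = (a 0 0 == 0).
Proof.
by apply/eqP/eqP => [->|a0]; rewrite ?mxE // [a]mx11_scalar a0 -scalemx1 scale0r.
Qed.

Lemma mxrank_mul_unit m n (P : 'M[F]_m) (A : 'M_(m, n)) (Q : 'M_n) :
  P \in unitmx -> Q \in unitmx -> \rank (P *m A *m Q) = \rank A.
Proof.
by move=> uP uQ; rewrite mxrankMfree ?row_free_unit // (eqmxMfull _ _) ?row_full_unit.
Qed.

Lemma unitmx_ublock m n (u : 'M[F]_(m, n)) : block_mx 1%:M u 0 1%:M \in unitmx.
Proof. by rewrite unitmxE det_ublock !det1 mulr1 unitr1. Qed.

Lemma unitmx_lblock m n (u : 'M[F]_(n, m)) : block_mx 1%:M 0 u 1%:M \in unitmx.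
Proof. by rewrite unitmxE det_lblock !det1 mulr1 unitr1. Qed.

Lemma mxrank_block_elim p q m n (a : 'M[F]_(p, q)) b c (D : 'M_(m, n)) y x :
  \rank (block_mx a b c D) =
  \rank (block_mx (a - y *m c - b *m x + y *m D *m x) (b - y *m D) (c - D *m x) D).
Proof.
have -> : block_mx (a - y *m c - b *m x + y *m D *m x) (b - y *m D) (c - D *m x) D
  = block_mx 1%:M (- y) 0 1%:M *m block_mx a b c D *m block_mx 1%:M 0 (- x) 1%:M.
  rewrite !mulmx_block !mul1mx !mul0mx !add0r !mulmx0 !mulmx1 !mulNmx !mulmxN.
  congr block_mx; rewrite ?addr0 ?add0r ?mulmxBl ?mulmxDl ?mulNmx ?mulmxA //.
  by rewrite opprB addrA [LHS]addrAC.
by rewrite mxrank_mul_unit ?unitmx_ublock ?unitmx_lblock.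
Qed.

Lemma mxrank_schur p m n (a : 'M[F]_p) b c (D : 'M_(m, n)) : a \in unitmx ->
  \rank (block_mx a b c D) = (p + \rank (D - c *m invmx a *m b)%R)%N.
Proof.
move=> ua.
have -> : block_mx a b c D = block_mx 1%:M 0 (c *m invmx a) 1%:M *m
   block_mx a 0 0 (D - c *m invmx a *m b) *m block_mx 1%:M (invmx a *m b) 0 1%:M.
  rewrite !mulmx_block !mul1mx !mul0mx !add0r !mulmx0 !mulmx1 !addr0 !add0r.
  rewrite mulmxA (mulmxV ua) mul1mx -(mulmxA c) (mulVmx ua) mulmx1.
  by rewrite mulmxA addrC subrK.
by rewrite mxrank_mul_unit ?unitmx_ublock ?unitmx_lblock // rank_diag_block_mx mxrank_unit.
Qed.

Lemma submx_of_ker k m n (D : 'M[F]_(m, n)) (b : 'M_(k, n)) :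
  (forall x : 'cV_n, D *m x = 0 -> b *m x = 0) -> (b <= D)%MS.
Proof.
move=> kerDb; rewrite submxE; apply/eqP/matrixP => i j.
have := kerDb (cokermx D *m delta_mx j 0).
rewrite mulmxA mulmx_coker mul0mx => /(_ erefl) /matrixP /(_ i 0).
by rewrite mulmxA -colE !mxE.
Qed.

Lemma colsub_of_ker k m n (D : 'M[F]_(m, n)) (c : 'M_(m, k)) :
  (forall y : 'rV_m, y *m D = 0 -> y *m c = 0) -> exists x, c = D *m x.
Proof.
move=> kerDc; have /submxP [x cxD] : (c^T <= D^T)%MS.
  apply: submx_of_ker => y yD; apply: trmx_inj.
  by rewrite trmx_mul trmxK trmx0 kerDc // -[D]trmxK -trmx_mul yD trmx0.
by exists x^T; apply: trmx_inj; rewrite trmx_mul trmxK.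
Qed.

End BlockRank.

Section CornerShift.
Variables (F : finFieldType) (l m : nat).
Implicit Types (D : 'M[F]_(l, m)) (a : 'M[F]_1) (b : 'rV[F]_m) (c : 'cV[F]_l).

Lemma unitmx11 a : (a \in unitmx) = (a != 0).
Proof. by rewrite unitmxE det_mx11 unitfE mx11_eq0. Qed.

Definition corner_free D b c : bool :=
  [exists y : 'rV_l, (y *m D == 0) && (y *m c != 0)] ||
  [exists x : 'cV_m, (D *m x == 0) && (b *m x != 0)].

Definition corner_solve b a : 'cV[F]_m := odflt 0 [pick x | b *m x == a].

(* If the corner matters, then b = y D and c = D x and the rank only depends on
   a - y D x; shifting c by D s with b s = a moves this value to the corner 0. *)
Definition corner_shift D a b c : 'cV_l :=
  if corner_free D b c then c else c - D *m corner_solve b a.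

Lemma corner_free_shift D b c x : corner_free D b (c - D *m x) = corner_free D b c.
Proof.
congr orb; apply: eq_existsb => y.
by have [yD0|//] := eqVneq (y *m D) 0; rewrite mulmxBr mulmxA yD0 mul0mx subr0.
Qed.

Lemma corner_shift_inj D a b : injective (corner_shift D a b).
Proof.
rewrite /corner_shift => c1 c2.
case f1: (corner_free D b c1); case f2: (corner_free D b c2) => //.
- by move=> c12; rewrite c12 corner_free_shift f2 in f1.
- by move=> c12; rewrite -c12 corner_free_shift f1 in f2.
- exact: addIr.
Qed.

Lemma mxrank_corner_free D a b c : corner_free D b c ->
  \rank (block_mx a b c D) = \rank (block_mx 0 b c D).
Proof.
case/orP => /existsP [z /andP [/eqP zD nz]].
- have uzc : z *m c \in unitmx by rewrite unitmx11.
  rewrite (mxrank_block_elim a b c D (a *m invmx (z *m c) *m z) 0).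
  by rewrite !mulmx0 !subr0 addr0 -!mulmxA (mulVmx uzc) mulmx1 subrr zD !mulmx0 subr0.
- have ubz : b *m z \in unitmx by rewrite unitmx11.
  rewrite (mxrank_block_elim a b c D 0 (z *m invmx (b *m z) *m a)).
  by rewrite !mul0mx !subr0 addr0 !mulmxA (mulmxV ubz) mul1mx subrr zD !mul0mx subr0.
Qed.

Lemma corner_factor D b c : ~~ corner_free D b c ->
  exists y x, b = y *m D /\ c = D *m x.
Proof.
case/norP => /existsPn noy /existsPn nox.
have /submxP [y ->] : (b <= D)%MS.
  by apply: submx_of_ker => x Dx; apply/eqP; move: (nox x); rewrite Dx eqxx negbK.
have [x ->] : exists x, c = D *m x.
  by apply: colsub_of_ker => y' yD; apply/eqP; move: (noy y'); rewrite yD eqxx negbK.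
by exists y, x.
Qed.

Lemma mxrank_block_factor D a y x :
  \rank (block_mx a (y *m D) (D *m x) D) = (\rank (a - y *m D *m x)%R + \rank D)%N.
Proof.
by rewrite (mxrank_block_elim _ _ _ _ y x) -rank_diag_block_mx !subrr !mulmxA subrK.
Qed.

Lemma mxrank_corner_shift D a b c :
  (\rank (block_mx 0 b (corner_shift D a b c) D) <= \rank (block_mx a b c D))%N.
Proof.
rewrite /corner_shift; case fr: (corner_free D b c); first by rewrite (mxrank_corner_free a fr).
have [y [x [-> ->]]] := corner_factor (negbT fr).
rewrite /corner_solve; case: pickP => [s /eqP bs | nosol] /=.
  by rewrite -mulmxBr !mxrank_block_factor leq_add2r mulmxBr bs sub0r opprB.
rewrite mulmx0 subr0 !mxrank_block_factor leq_add2r.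
suff -> : y *m D *m x = 0 by rewrite !subr0 mxrank0.
apply/eqP; apply: contraT => nz.
have ubx : y *m D *m x \in unitmx by rewrite unitmx11.
have := nosol (x *m invmx (y *m D *m x) *m a).
by rewrite !mulmxA (mulmxV ubx) mul1mx eqxx.
Qed.

End CornerShift.

Section Counting.
Variable F : finFieldType.

Definition rank_corner_set l m t (g : 'M[F]_(l, m) -> F) : {set 'M[F]_(1 + l, 1 + m)} :=
  [set M | (\rank M <= t)%N && (ulsubmx M 0 0 == g (drsubmx M))].

Lemma card_rank_corner_le l m t (g : 'M[F]_(l, m) -> F) :
  (#|rank_corner_set t g| <= #|rank_corner_set t (fun _ : 'M_(l, m) => 0%R)|)%N.
Proof.
pose shift (M : 'M[F]_(1 + l, 1 + m)) := block_mx 0 (ursubmx M)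
  (corner_shift (drsubmx M) (ulsubmx M) (ursubmx M) (dlsubmx M)) (drsubmx M).
have shift_inj : {in rank_corner_set t g &, injective shift}.
  move=> M N; rewrite !inE => /andP [_ /eqP gM] /andP [_ /eqP gN] /eq_block_mx [_ eur edl edr].
  have eul : ulsubmx M = ulsubmx N by rewrite [LHS]mx11_scalar [RHS]mx11_scalar gM gN edr.
  move: edl; rewrite eur edr eul => /corner_shift_inj edl.
  by rewrite -[M]submxK -[N]submxK eur edr eul edl.
rewrite -(card_in_imset shift_inj); apply/subset_leq_card/subsetP => _ /imsetP [M + ->].
rewrite !inE block_mxKul => /andP [rkM _]; rewrite mxE eqxx andbT.
by apply: leq_trans rkM; rewrite -{2}[M]submxK mxrank_corner_shift.
Qed.

Lemma card_block_mx p q l m (A : {set 'M[F]_(p, q)}) (D : {set 'M[F]_(l, m)}) :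
  #|[set M : 'M[F]_(p + l, q + m) | (ulsubmx M \in A) && (drsubmx M \in D)]| =
  (#|A| * #|F| ^ (p * m + l * q) * #|D|)%N.
Proof.
pose blk (x : ('M[F]_(p, q) * 'M[F]_(p, m)) * ('M[F]_(l, q) * 'M[F]_(l, m))) :=
  block_mx x.1.1 x.1.2 x.2.1 x.2.2.
have blk_inj : injective blk.
  by move=> [[a b] [c d]] [[a' b'] [c' d']] /eq_block_mx [/= -> -> -> ->].
have -> : [set M | (ulsubmx M \in A) && (drsubmx M \in D)] =
          blk @: setX (setX A setT) (setX setT D).
  apply/setP => M; rewrite inE; apply/idP/imsetP => [/andP [MA MD] | [[[a b] [c d]]]].
    exists ((ulsubmx M, ursubmx M), (dlsubmx M, drsubmx M)); first by rewrite !inE MA MD.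
    by rewrite /blk /= submxK.
  by rewrite !inE /= andbT => /andP [aA dD] ->; rewrite block_mxKul block_mxKdr aA dD.
rewrite card_imset // !cardsX !cardsT !card_mx expnD.
by rewrite !mulnA; congr (_ * _)%N; rewrite -!mulnA; congr (_ * _)%N; rewrite mulnC.
Qed.

Lemma card_rank_corner_nz l m t :
  #|[set M : 'M[F]_(1 + l, 1 + m) | (\rank M <= t.+1)%N && (ulsubmx M 0 0 != 0)]| =
  (#|F|.-1 * #|F| ^ (l + m) * nu F t l m)%N.
Proof.
pose schur (M : 'M[F]_(1 + l, 1 + m)) := block_mx (ulsubmx M) (ursubmx M) (dlsubmx M)
  (drsubmx M - dlsubmx M *m invmx (ulsubmx M) *m ursubmx M).
have schur_inj : injective schur.
  move=> M N /eq_block_mx [eul eur edl]; rewrite eul eur edl => /addIr edr.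
  by rewrite -[M]submxK -[N]submxK eul eur edl edr.
have -> : [set M | (\rank M <= t.+1)%N && (ulsubmx M 0 0 != 0)] =
  schur @^-1: [set N | (ulsubmx N \in [set~ 0]) && (drsubmx N \in [set D | (\rank D <= t)%N])].
  apply/setP => M; rewrite !inE /schur block_mxKul block_mxKdr -mx11_eq0.
  have [-> | ul_nz] := eqVneq (ulsubmx M) 0; first by rewrite andbF.
  by rewrite -{1}[M]submxK mxrank_schur ?unitmx11 // andbT.
by rewrite card_preimset // card_block_mx cardsC1 card_mx !muln1 mul1n addnC.
Qed.

Lemma linform_tr l m (f M : 'M[F]_(l, m)) : linform f M = \tr (f^T *m M).
Proof.
rewrite /linform /mxtrace exchange_big; apply: eq_bigr => j _; rewrite !mxE.
by apply: eq_bigr => i _; rewrite mxE.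
Qed.

Lemma linform0 l m (M : 'M[F]_(l, m)) : linform 0 M = 0.
Proof. by rewrite linform_tr trmx0 mul0mx mxtrace0. Qed.

Lemma linformZ l m (f M : 'M[F]_(l, m)) a : linform f (a *: M) = a * linform f M.
Proof. by rewrite !linform_tr -scalemxAr mxtraceZ. Qed.

Lemma linform_corner l m (B : 'M[F]_(l, m)) (M : 'M[F]_(1 + l, 1 + m)) :
  linform (block_mx 1%:M 0 0 B) M = ulsubmx M 0 0 + linform B (drsubmx M).
Proof.
rewrite !linform_tr -{1}[M]submxK tr_block_mx mulmx_block mxtrace_block !trmx0 trmx1.
by rewrite mul1mx !mul0mx addr0 add0r /mxtrace big_ord1.
Qed.

Definition affine_weight l m t (f : 'M[F]_(l, m)) : nat :=
  #|[set M : 'M[F]_(l, m) | (\rank M <= t)%N && (linform f M != 0)]|.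

Lemma affine_weight_equiv l m t (f : 'M[F]_(l, m)) P Q :
  P \in unitmx -> Q \in unitmx -> affine_weight t (P *m f *m Q) = affine_weight t f.
Proof.
move=> uP uQ; have uPt : P^T \in unitmx by rewrite unitmx_tr.
have uQt : Q^T \in unitmx by rewrite unitmx_tr.
have act_inj : injective (fun M : 'M[F]_(l, m) => P^T *m M *m Q^T).
  by move=> M N /(congr1 (fun X => invmx P^T *m X *m invmx Q^T));
    rewrite !mulmxA !(mulVmx uPt) !mul1mx !(mulmxK uQt).
rewrite /affine_weight -[RHS](card_preimset _ act_inj); apply: eq_card => M.
rewrite !inE mxrank_mul_unit //; congr (_ && (_ != 0)).
rewrite !linform_tr [LHS]mxtrace_mulC [RHS]mxtrace_mulC -!mulmxA [RHS]mxtrace_mulC.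
by rewrite !trmx_mul !mulmxA.
Qed.

Lemma pid_mx_succ_block l m r :
  pid_mx r.+1 = block_mx 1%:M 0 0 (pid_mx r) :> 'M[F]_(1 + l, 1 + m).
Proof.
rewrite -[LHS]submxK; congr block_mx; apply/matrixP => i j; rewrite !mxE /=;
  by rewrite ?ord1 ?add1n ?eqSS ?ltnS.
Qed.

Lemma affine_weight_reduce l m t (f : 'M[F]_(1 + l, 1 + m)) : f != 0 ->
  exists B : 'M[F]_(l, m),
    affine_weight t f = affine_weight t (block_mx 1%:M 0 0 B : 'M_(1 + l, 1 + m)).
Proof.
rewrite -mxrank_eq0; have := mulmx_ebase f; case: (\rank f) => // r fE _.
exists (pid_mx r); rewrite -pid_mx_succ_block -[in LHS]fE.
by rewrite affine_weight_equiv ?col_ebase_unit ?row_ebase_unit.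
Qed.

Lemma affine_weight_corner l m t (B : 'M[F]_(l, m)) :
  affine_weight t (block_mx 1%:M 0 0 B : 'M_(1 + l, 1 + m)) =
  (#|[set M : 'M[F]_(1 + l, 1 + m) | (\rank M <= t)%N]| -
   #|rank_corner_set t (fun D => - linform B D)|)%N.
Proof.
set S := rank_corner_set _ _.
have sub : S \subset [set M | (\rank M <= t)%N] by apply/subsetP => M; rewrite !inE => /andP [].
rewrite -(setIidPr sub) -cardsD /affine_weight /S /rank_corner_set; apply: eq_card => M.
by rewrite !inE linform_corner addr_eq0 andbC; case: (\rank M <= t)%N; rewrite ?andbT ?andbF.
Qed.

Lemma affine_weight_corner_min l m t (B : 'M[F]_(l, m)) :
  (affine_weight t (block_mx 1%:M 0 0 0 : 'M_(1 + l, 1 + m))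
   <= affine_weight t (block_mx 1%:M 0 0 B : 'M_(1 + l, 1 + m)))%N.
Proof.
rewrite !affine_weight_corner leq_sub2l //; apply: leq_trans (card_rank_corner_le _ _) _.
by apply/eq_leq/eq_card => M; rewrite !inE linform0 oppr0.
Qed.

Lemma affine_weight_corner1 l m t :
  affine_weight t.+1 (block_mx 1%:M 0 0 0 : 'M_(1 + l, 1 + m)) =
  (#|F|.-1 * #|F| ^ (l + m) * nu F t l m)%N.
Proof.
by rewrite -card_rank_corner_nz; apply: eq_card => M; rewrite !inE linform_corner linform0 addr0.
Qed.

Lemma normalized_neq0 l m (N : 'M[F]_(l, m)) : normalized N -> N != 0.
Proof.
case/existsP => k /andP [/eqP Nk _]; apply: contra_eq_neq Nk => ->.
by rewrite linear0 mxE eq_sym oner_neq0.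
Qed.

Lemma normalized_scale_eq1 l m (N : 'M[F]_(l, m)) c :
  normalized N -> normalized (c *: N) -> c = 1.
Proof.
have entry j : mxvec (c *: N) 0 j = c * mxvec N 0 j by rewrite linearZ mxE.
case/existsP => k /andP [/eqP Nk /forallP Nlt].
case/existsP => k' /andP [/eqP cNk' /forallP cNlt].
case: (ltngtP k k') => [lt | lt | /val_inj eqk].
- move: (cNlt k) cNk'; rewrite lt !entry Nk mulr1 => /eqP ->.
  by rewrite mul0r => /eqP; rewrite eq_sym oner_eq0.
- move: (Nlt k') cNk'; rewrite lt entry => /eqP ->.
  by rewrite mulr0 => /eqP; rewrite eq_sym oner_eq0.
- by move: cNk'; rewrite entry -eqk Nk mulr1.
Qed.

Lemma normalize_exists l m (M : 'M[F]_(l, m)) :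
  M != 0 -> exists2 c : F, c != 0 & normalized (c^-1 *: M).
Proof.
rewrite -mxvec_eq0 => /eqP /rowP /eqfunP /forallPn [k0 Mk0]; rewrite mxE in Mk0.
case: (@arg_minnP _ k0 (fun k => mxvec M 0 k != 0) val Mk0) => k Mk kmin.
exists (mxvec M 0 k) => //; apply/existsP; exists k.
rewrite linearZ mxE mulVf // eqxx; apply/forallP => k'; apply/implyP => lt_k'k.
rewrite mxE mulf_eq0; apply/orP; right; apply: contraLR lt_k'k.
by rewrite -leqNgt; apply: kmin.
Qed.

Lemma card_scale_normalized l m (P : pred 'M[F]_(l, m)) :
  (forall c M, c != 0 -> P (c *: M) = P M) ->
  (#|F|.-1 * #|[set N | normalized N && P N]|)%N = #|[set M | (M != 0) && P M]|.
Proof.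
move=> Pscale; pose scale (x : F * 'M[F]_(l, m)) := x.1 *: x.2.
have scale_inj : {in setX [set~ 0] [set N | normalized N && P N] &, injective scale}.
  move=> [a N] [b N']; rewrite !inE /scale /= => /andP [a0 /andP [nN _]].
  move=> /andP [b0 /andP [nN' _]] abN.
  have N'E : N' = (b^-1 * a) *: N by rewrite -scalerA abN scalerA mulVf ?scale1r.
  have ba1 : b^-1 * a = 1 by apply: normalized_scale_eq1 nN _; rewrite -N'E.
  have ab : a = b by rewrite -[a]mul1r -(mulfV b0) -mulrA ba1 mulr1.
  by rewrite N'E ba1 scale1r ab.
rewrite -(cardsC1 (0 : F)) -cardsX -(card_in_imset scale_inj); apply: eq_card => M.
rewrite inE; apply/imsetP/andP => [[[a N]] | [M_nz PM]].
  rewrite !inE /= => /andP [a0 /andP [nN PN]] ->.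
  by rewrite /scale scaler_eq0 negb_or a0 normalized_neq0 // Pscale.
have [c c_nz nM] := normalize_exists M_nz.
exists (c, c^-1 *: M); last by rewrite /scale scalerA divff // scale1r.
by rewrite !inE /= c_nz nM Pscale ?invr_eq0.
Qed.

Lemma hweight_codeword t l m (f : 'M[F]_(l, m)) :
  hweight (codeword t f) = #|[set M in detPoints F t l m | linform f M != 0]|.
Proof.
rewrite /hweight -(card_imset _ (@enum_val_inj _ (mem (detPoints F t l m)))).
apply: eq_card => M; rewrite inE; apply/imsetP/andP => [[i] | [M_pt fM]].
  by rewrite inE ffunE => fi ->; split => //; apply: enum_valP.
by exists (enum_rank_in M_pt M); rewrite ?inE ?ffunE enum_rankK_in.
Qed.

Lemma affine_weight_codeword t l m (f : 'M[F]_(l, m)) :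
  (#|F|.-1 * hweight (codeword t f))%N = affine_weight t f.
Proof.
have fM_nz M : linform f M != 0 -> M != 0.
  by apply: contraNneq => ->; rewrite linform_tr mulmx0 mxtrace0.
rewrite hweight_codeword.
have -> : [set M in detPoints F t l m | linform f M != 0] =
          [set N | normalized N && ((\rank N <= t)%N && (linform f N != 0))].
  apply/setP => N; rewrite !inE; have [fN | _] := boolP (linform f N != 0); last by rewrite !andbF.
  by rewrite fM_nz //= !andbT andbC.
rewrite card_scale_normalized => [|c M c_nz]; last first.
  by rewrite mxrank_scale_nz // linformZ mulf_eq0 (negPf c_nz).
apply: eq_card => M; rewrite !inE; have [fM | _] := boolP (linform f M != 0); last by rewrite !andbF.
by rewrite fM_nz.
Qed.

End Counting.

Theorem mainTheorem6 (F : finFieldType) (t l m : nat)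
  (h1t : (1 <= t)%N) (htl : (t <= l)%N) (hlm : (l <= m)%N) :
  is_min_distance (detCode F t l m)
    (#|F| ^ (l + m - 2) * nu F t.-1 l.-1 m.-1)%N.
Proof.
case: t h1t htl => // t _ htl; case: l htl hlm => // l _ hlm; case: m hlm => // m _.
rewrite addSn addnS !subSS subn0 /=.
have q1_gt0 : (0 < #|F|.-1)%N.
  by rewrite -(cardsC1 (0 : F)); apply/card_gt0P; exists 1; rewrite !inE oner_neq0.
set E := block_mx 1%:M 0 0 0 : 'M[F]_(1 + l, 1 + m).
have wE : hweight (codeword t.+1 E) = (#|F| ^ (l + m) * nu F t l m)%N.
  by apply/eqP; rewrite -(eqn_pmul2l q1_gt0) affine_weight_codeword affine_weight_corner1 mulnA.
split=> [|_ /[!inE] /existsP [f /eqP ->] cw_nz].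
  exists (codeword t.+1 E); first by rewrite inE; apply/existsP; exists E.
  split=> //; apply: contra_eq_neq wE => ->.
  rewrite [hweight _]eq_card0 => [|i]; last by rewrite inE ffunE eqxx.
  rewrite eq_sym -lt0n muln_gt0 expn_gt0 (leq_trans q1_gt0 (leq_pred _)) /=.
  by apply/card_gt0P; exists 0; rewrite inE mxrank0.
have f_nz : f != 0.
  by apply: contraNneq cw_nz => ->; apply/eqP/ffunP => i; rewrite !ffunE linform0.
rewrite -(leq_pmul2l q1_gt0) mulnA -affine_weight_corner1 affine_weight_codeword.
have [B ->] := affine_weight_reduce t.+1 f_nz.
exact: affine_weight_corner_min.
Qed.
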